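(* Let $(\mathbb{X},\oplus,\otimes,\mathbb{0},\mathbb{1})$ be a linearly ordered, algebraically complete idempotent semifield, and let $\bm{A}_1,\ldots,\bm{A}_m\in\mathbb{X}^{n\times n}$ be matrices such that $\bm{B}=\bm{A}_{1}\oplus\bm{A}_{1}^{-}\oplus\cdots\oplus\bm{A}_{m}\oplus\bm{A}_{m}^{-}$ has no zero entries. Let $\mu$ be the spectral radius of $\bm{B}$ and $\bm{B}_{\mu}=\mu^{-1}\bm{B}$. Consider the problem of minimizing $\max_{1\le i\le m} d(\bm{A}_i,\bm{x}\bm{x}^{-})$ (maximum with respect to the order of $\mathbb{X}$, i.e. $\bigoplus_{i=1}^m d(\bm{A}_i,\bm{x}\bm{x}^{-})$) over all regular vectors $\bm{x}\in\mathbb{X}^n$. Then the minimum value equals $\mu$, and the set of all solutions is $\{\bm{x}=\bm{B}_{\mu}^{\ast}\bm{u}:\bm{u}\in\mathbb{X}^n,\ \bm{u}\ne\bm{0}\}$.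
   Context: An idempotent semifield is a set $\mathbb{X}$ with associative, commutative operations $\oplus$ (addition) and $\otimes$ (multiplication, usually omitted in writing) with neutral elements $\mathbb{0}$ and $\mathbb{1}$, multiplication distributing over addition, idempotent addition ($x\oplus x=x$), and every nonzero $x$ having an inverse $x^{-1}$ with $xx^{-1}=\mathbb{1}$. It is assumed linearly ordered by the order $x\le y \iff x\oplus y=y$, and algebraically complete: $x^p=a$ is solvable for every $a$ and integer $p>0$, so rational powers are defined. Matrix and vector operations use the usual formulas with $\oplus,\otimes$ in place of $+,\times$; $\bm{0}$ is the zero vector; a vector is regular if it has no zero entries. For a nonzero column vector $\bm{x}=(x_i)$, $\bm{x}^{-}$ is the row vector with entries $x_i^{-1}$ if $x_i\ne\mathbb{0}$ and $\mathbb{0}$ otherwise. For a nonzero matrix $\bm{A}=(a_{ij})$, $\bm{A}^{-}=(a^{-}_{ij})$ with $a^{-}_{ij}=a_{ji}^{-1}$ if $a_{ji}\neq\mathbb{0}$ and $\mathbb{0}$ otherwise. The trace is $\mathrm{tr}\,\bm{A}=a_{11}\oplus\cdots\oplus a_{nn}$. The distance between square matrices is $d(\bm{A},\bm{B})=\mathrm{tr}(\bm{B}^{-}\bm{A})\oplus\mathrm{tr}(\bm{A}^{-}\bm{B})$. $\bm{I}$ is the identity matrix, $\bm{A}^0=\bm{I}$, $\bm{A}^p=\bm{A}^{p-1}\bm{A}$. The spectral radius of $\bm{A}$ of order $n$ is $\lambda=\bigoplus_{k=1}^{n}\bigoplus_{1\le i_1,\ldots,i_k\le n}(a_{i_1i_2}a_{i_2i_3}\cdots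 a_{i_ki_1})^{1/k}$. For a square matrix $\bm{M}$ of order $n$, $\bm{M}^{\ast}=\bm{I}\oplus\bm{M}\oplus\cdots\oplus\bm{M}^{n-1}$. *)

From Stdlib Require Import ClassicalEpsilon.
From mathcomp Require Import all_boot.
Set Implicit Arguments. Unset Strict Implicit. Unset Printing Implicit Defensive.

Record idsemifield := IdSemifield {
  car :> eqType;
  sadd : car -> car -> car;
  smul : car -> car -> car;
  szero : car;
  sone : car;
  sinv : car -> car;
  saddA : forall x y z, sadd x (sadd y z) = sadd (sadd x y) z;
  saddC : forall x y, sadd x y = sadd y x;
  sadd0 : forall x, sadd szero x = x;
  smulA : forall x y z, smul x (smul y z) = smul (smul x y) z;
  smulC : forall x y, smul x y = smul y x;
  smul1 : forall x, smul sone x = x;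
  smul0 : forall x, smul szero x = szero;
  smulDl : forall x y z, smul (sadd x y) z = sadd (smul x z) (smul y z);
  saddxx : forall x, sadd x x = x;
  sone_neq0 : sone <> szero;
  smulV : forall x, x <> szero -> smul x (sinv x) = sone;
  (* linear order: x <= y iff x (+) y = y *)
  slinear : forall x y, sadd x y = x \/ sadd x y = y;
  salg_complete : forall (a : car) (p : nat), (0 < p)%N ->
      exists x, iter p (smul x) sone = a
}.

Section Ops.
Variable X : idsemifield.

Definition sle (x y : X) : Prop := sadd x y = y.
Definition spow (x : X) (p : nat) : X := iter p (smul x) (sone X).

(* the (unique) p-th root a^(1/p), p > 0, given by algebraic completeness *)
Definition sroot (p : nat) (a : X) : X :=
  epsilon (inhabits (szero X)) (fun x => spow x p = a).

Definition smat n := 'I_n -> 'I_n -> X.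
Definition svec n := 'I_n -> X.

Definition ssum (I : finType) (F : I -> X) : X := \big[@sadd X/szero X]_(i : I) F i.
Definition sprod (I : finType) (F : I -> X) : X := \big[@smul X/sone X]_(i : I) F i.

Definition mmul n (A B : smat n) : smat n := fun i j => ssum (fun k => smul (A i k) (B k j)).
Definition mvmul n (A : smat n) (x : svec n) : svec n := fun i => ssum (fun k => smul (A i k) (x k)).
Definition madd n (A B : smat n) : smat n := fun i j => sadd (A i j) (B i j).
Definition mscale n (a : X) (A : smat n) : smat n := fun i j => smul a (A i j).
Definition mid n : smat n := fun i j => if i == j then sone X else szero X.
Definition mpow n (A : smat n) (p : nat) : smat n := iter p (fun M => mmul M A) (@mid n).
Definition mtr n (A : smat n) : X := ssum (fun i => A i i).

Definition sinvz (a : X) : X := if a == szero X then szero X else sinv a.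
Definition vconj n (x : svec n) : svec n := fun i => sinvz (x i).
Definition mconj n (A : smat n) : smat n := fun i j => sinvz (A j i).
(* x x^- (column times row) *)
Definition outer_conj n (x : svec n) : smat n := fun i j => smul (x i) (vconj x j).

Definition mdist n (A B : smat n) : X := sadd (mtr (mmul (mconj B) A)) (mtr (mmul (mconj A) B)).

Definition regular n (x : svec n) : Prop := forall i, x i <> szero X.
Definition nonzero_vec n (x : svec n) : Prop := exists i, x i <> szero X.

Definition kstar n (M : smat n) : smat n :=
  fun i j => \big[@sadd X/szero X]_(p < n) mpow M p i j.

Definition spec_radius n (A : smat n) : X :=
  \big[@sadd X/szero X]_(k < n)
    ssum (fun f : {ffun 'I_k.+1 -> 'I_n} =>
      sroot k.+1 (sprod (fun j : 'I_k.+1 => A (f j) (f (ordS j))))).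

End Ops.

(* For regular [x] the objective equals [x^- B x = (+)_(i,k) x_i^-1 b_ik x_k]:
   [tr ((x x^-)^- A_l)] contributes the entries of [A_l] and [tr (A_l^- (x x^-))]
   those of [A_l^-]. Telescoping [x] along a cycle bounds every cycle mean of [B]
   by [x^- B x], so [mu <= x^- B x], while [x^- B x <= mu] iff [B_mu x <= x].
   Every cycle of [B_mu] has weight at most 1, so cutting cycles out of long paths
   bounds every power of [B_mu] by [B_mu^*]. Hence [B_mu (B_mu^* u) <= B_mu^* u],
   and [B_mu^* u] is regular since [B] has no zero entries; conversely a regular
   [x] with [B_mu x <= x] satisfies [x = B_mu^* x]. *)

From HB Require Import structures.
From mathcomp Require Import all_boot zify.
From Stdlib Require Import FunctionalExtensionality Ring ClassicalEpsilon.
Set Implicit Arguments. Unset Strict Implicit. Unset Printing Implicit Defensive.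

Section Semifield.
Variable X : idsemifield.
Implicit Types x y z w c : X.

Lemma smulr0 x : smul x (szero X) = szero X.
Proof. by rewrite smulC smul0. Qed.

Lemma smulDr x y z : smul x (sadd y z) = sadd (smul x y) (smul x z).
Proof. by rewrite smulC smulDl !(smulC x). Qed.

HB.instance Definition _ := Monoid.isComLaw.Build (car X) (szero X) (@sadd X)
  (@saddA X) (@saddC X) (@sadd0 X).
HB.instance Definition _ := Monoid.isComLaw.Build (car X) (sone X) (@smul X)
  (@smulA X) (@smulC X) (@smul1 X).
HB.instance Definition _ := Monoid.isMulLaw.Build (car X) (szero X) (@smul X)
  (@smul0 X) smulr0.
HB.instance Definition _ := Monoid.isAddLaw.Build (car X) (@smul X) (@sadd X)
  (@smulDl X) smulDr.

Lemma idsemifield_semi_ring_theory :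
  semi_ring_theory (szero X) (sone X) (@sadd X) (@smul X) (@eq X).
Proof.
constructor=> *; rewrite ?sadd0 ?smul1 ?smul0 ?saddA ?smulA ?smulDl //.
- exact: saddC.
- exact: smulC.
Qed.
Add Ring idsemifield_ring : idsemifield_semi_ring_theory.

Lemma sle_refl x : sle x x. Proof. exact: saddxx. Qed.

Lemma sle_trans x y z : sle x y -> sle y z -> sle x z.
Proof. by rewrite /sle => hxy hyz; rewrite -hyz saddA hxy. Qed.

Lemma sle_anti x y : sle x y -> sle y x -> x = y.
Proof. by rewrite /sle => hxy hyx; rewrite -hxy -{1}hyx saddC. Qed.

Lemma sle_total x y : sle x y \/ sle y x.
Proof. rewrite /sle saddC; exact: slinear. Qed.

Lemma sle_addl x y : sle x (sadd x y).
Proof. by rewrite /sle saddA saddxx. Qed.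

Lemma sle_add_lub x y z : sle x z -> sle y z -> sle (sadd x y) z.
Proof. by rewrite /sle => hxz hyz; rewrite -saddA hyz hxz. Qed.

Lemma sle0x x : sle (szero X) x. Proof. exact: sadd0. Qed.

Lemma slex0 x : sle x (szero X) -> x = szero X.
Proof. by rewrite /sle saddC sadd0. Qed.

Lemma sle_neq0 x y : sle x y -> x <> szero X -> y <> szero X.
Proof. by move=> hxy hx hy; apply/hx/slex0; rewrite -hy. Qed.

Lemma sle_mul2r z x y : sle x y -> sle (smul x z) (smul y z).
Proof. by rewrite /sle => hxy; rewrite -smulDl hxy. Qed.

Lemma sle_mul2l z x y : sle x y -> sle (smul z x) (smul z y).
Proof. by rewrite !(smulC z); apply: sle_mul2r. Qed.

Lemma sle_mul x y z w : sle x y -> sle z w -> sle (smul x z) (smul y w).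
Proof. by move=> hxy hzw; apply: sle_trans (sle_mul2r z hxy) (sle_mul2l y hzw). Qed.

Lemma smulKV x y : x <> szero X -> smul (smul x (sinv x)) y = y.
Proof. by move=> hx; rewrite smulV // smul1. Qed.

Lemma smul_cancelr c x y : c <> szero X -> smul x c = smul y c -> x = y.
Proof.
move=> hc hxy.
have ez z : z = smul (smul z c) (sinv c) by rewrite -smulA smulV // smulC smul1.
by rewrite (ez x) (ez y) hxy.
Qed.

Lemma smul_neq0 x y : x <> szero X -> y <> szero X -> smul x y <> szero X.
Proof.
move=> hx hy hxy; apply: hy.
by rewrite -(smulKV y hx) -smulA (smulC (sinv x)) smulA hxy smul0.
Qed.

Lemma sinv_neq0 x : x <> szero X -> sinv x <> szero X.
Proof. by move=> hx hVx; apply: (@sone_neq0 X); rewrite -(smulV hx) hVx smulr0. Qed.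

Lemma sinv_unique x y : smul y x = sone X -> x <> szero X -> y = sinv x.
Proof.
move=> hyx hx; rewrite -[y](smulKV _ hx).
have -> : smul (smul x (sinv x)) y = smul (sinv x) (smul y x) by ring.
by rewrite hyx smulC smul1.
Qed.

Lemma sinvK x : x <> szero X -> sinv (sinv x) = x.
Proof. by move=> hx; symmetry; apply: sinv_unique; [exact: smulV|exact: sinv_neq0]. Qed.

Lemma sinvM x y : x <> szero X -> y <> szero X ->
  sinv (smul x y) = smul (sinv x) (sinv y).
Proof.
move=> hx hy; symmetry; apply: sinv_unique; last exact: smul_neq0.
have -> : smul (smul (sinv x) (sinv y)) (smul x y)
        = smul (smul x (sinv x)) (smul y (sinv y)) by ring.
by rewrite smulKV // smulV.
Qed.

Lemma sinvzE x : x <> szero X -> sinvz x = sinv x.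
Proof. by rewrite /sinvz; case: eqP. Qed.

Lemma sle_mulVr c x y : c <> szero X -> sle (smul c x) y -> sle x (smul (sinv c) y).
Proof.
move=> hc hcx; rewrite -[x](smulKV _ hc) (smulC c) -smulA.
exact: sle_mul2l.
Qed.

Lemma sle_bigsum_term (I : finType) (F : I -> X) i :
  sle (F i) (\big[@sadd X/szero X]_(j : I) F j).
Proof. by rewrite (bigD1 i) //=; apply: sle_addl. Qed.

Lemma bigsum_sle (I : finType) (F : I -> X) c :
  (forall i, sle (F i) c) -> sle (\big[@sadd X/szero X]_(j : I) F j) c.
Proof.
move=> hF; apply: (big_ind (fun v => sle v c)) => //; first exact: sle0x.
by move=> *; apply: sle_add_lub.
Qed.

Lemma spowS x p : spow x p.+1 = smul x (spow x p). Proof. by []. Qed.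

Lemma spow_sle x y p : sle x y -> sle (spow x p) (spow y p).
Proof. by move=> hxy; elim: p => [|p IH]; [exact: sle_refl|exact: sle_mul]. Qed.

Lemma spow_neq0 x p : x <> szero X -> spow x p <> szero X.
Proof. by move=> hx; elim: p => [|p IH]; [exact: sone_neq0|exact: smul_neq0]. Qed.

Lemma spowMn x y p : spow (smul x y) p = smul (spow x p) (spow y p).
Proof. by elim: p => [|p IH]; rewrite ?spowS ?IH /=; ring. Qed.

Lemma spow1n p : spow (sone X) p = sone X.
Proof. by elim: p => // p IH; rewrite spowS IH smul1. Qed.

Lemma spow0n p : (0 < p)%N -> spow (szero X) p = szero X.
Proof. by case: p => // p _; rewrite spowS smul0. Qed.

Lemma spow_sle_cancel x y p : (0 < p)%N -> sle (spow x p) (spow y p) -> sle x y.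
Proof.
case: p => // p _ hxy; case: (sle_total x y) => // hyx.
have exy : spow y p.+1 = spow x p.+1 by apply: sle_anti => //; apply: spow_sle.
have [x0|hx] := eqVneq x (szero X).
  by rewrite x0 in hyx *; rewrite (slex0 hyx); apply: sle_refl.
have hxp : spow x p <> szero X by apply/spow_neq0/eqP.
have eyx : smul y (spow x p) = smul x (spow x p).
  apply: sle_anti; first exact: sle_mul2r.
  by rewrite -spowS -exy spowS; apply/sle_mul2l/spow_sle.
by rewrite (smul_cancelr hxp eyx); apply: sle_refl.
Qed.

Lemma srootK p (a : X) : (0 < p)%N -> spow (sroot p a) p = a.
Proof.
by move=> hp; apply: (epsilon_spec _ (fun x : X => spow x p = a)); exact: salg_complete.
Qed.

Section Matrices.
Variable n : nat.
Implicit Types (M : smat X n) (f g : nat -> 'I_n).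

Definition path_weight M f a b := \big[@smul X/sone X]_(a <= t < b) M (f t) (f t.+1).

Lemma path_weight_nil M f a : path_weight M f a a = sone X.
Proof. by rewrite /path_weight big_geq. Qed.

Lemma path_weight_recr M f a b : (a <= b)%N ->
  path_weight M f a b.+1 = smul (path_weight M f a b) (M (f b) (f b.+1)).
Proof. by move=> hab; rewrite /path_weight big_nat_recr. Qed.

Lemma path_weight_cat M f a b d : (a <= b)%N -> (b <= d)%N ->
  path_weight M f a d = smul (path_weight M f a b) (path_weight M f b d).
Proof. by move=> hab hbd; rewrite /path_weight (big_cat_nat hab hbd). Qed.

Lemma eq_path_weight M f g a b :
  (forall t, (a <= t < b)%N -> f t = g t /\ f t.+1 = g t.+1) ->
  path_weight M f a b = path_weight M g a b.
Proof. by move=> efg; apply: eq_big_nat => t /efg [-> ->]. Qed.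

Lemma path_weight_shift M f a b :
  path_weight M f a b = path_weight M (fun t => f (t + a)%N) 0 (b - a).
Proof.
by rewrite /path_weight -{1}(add0n a) big_addn; apply: eq_bigr => t _; rewrite addSn.
Qed.

Lemma path_weight_scale M c f k :
  path_weight (mscale c M) f 0 k = smul (spow c k) (path_weight M f 0 k).
Proof.
elim: k => [|k IH]; first by rewrite !path_weight_nil smul1.
by rewrite !path_weight_recr // IH spowS /mscale; ring.
Qed.

Lemma mpowS M p : mpow M p.+1 = mmul (mpow M p) M. Proof. by []. Qed.

Lemma path_weight_le_mpow M f p : sle (path_weight M f 0 p) (mpow M p (f 0%N) (f p)).
Proof.
elim: p => [|p IH]; first by rewrite path_weight_nil /= /mid eqxx; apply: sle_refl.
rewrite path_weight_recr // mpowS.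
by apply: sle_trans (sle_bigsum_term _ (f p)); apply: sle_mul2r.
Qed.

Lemma mpow_sle_of_paths M p i j c :
  (forall f, f 0%N = i -> f p = j -> sle (path_weight M f 0 p) c) ->
  sle (mpow M p i j) c.
Proof.
elim: p i j c => [|p IH] i j c hpaths.
  rewrite /= /mid; case: eqP => [eij|_]; last exact: sle0x.
  by rewrite -(path_weight_nil M (fun _ => i) 0); apply: hpaths; rewrite ?eij.
rewrite mpowS /mmul /ssum; apply: bigsum_sle => k.
have [->|/eqP hk] := eqVneq (M k j) (szero X); first by rewrite smulr0; apply: sle0x.
have hc : c = smul (smul (sinv (M k j)) c) (M k j) by rewrite smulC smulA smulKV.
rewrite hc; apply: sle_mul2r; apply: IH => f f0 fp; apply: sle_mulVr => //.
pose f' t := if t == p.+1 then j else f t.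
have ef' : path_weight M f' 0 p = path_weight M f 0 p.
  apply: eq_path_weight => t /andP[_ ht].
  by rewrite /f' !ifF //; lia.
have := hpaths f'; rewrite /f' eqxx /= => /(_ f0 erefl).
by rewrite path_weight_recr // ef' /f' eqxx (ltn_eqF (ltnSn p)) fp smulC.
Qed.

Definition short_cycles_le1 M : Prop := forall f a b,
  (a < b)%N -> (b - a <= n)%N -> f a = f b -> sle (path_weight M f a b) (sone X).

Lemma path_repeats f : exists a b, (a < b <= n)%N /\ f a = f b.
Proof.
have : ~~ injectiveb (fun t : 'I_n.+1 => f t).
  by apply/negP => /injectiveP /leq_card; rewrite !card_ord ltnn.
case/injectivePn => t1 [t2 nt12 ft12].
have ltn_t (t : 'I_n.+1) : (t <= n)%N by rewrite -ltnS.
case: (ltngtP t1 t2) => [lt12|lt21|e12].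
- by exists t1, t2; rewrite lt12 ltn_t.
- by exists t2, t1; rewrite lt21 ltn_t.
- by move: nt12; rewrite (val_inj e12) eqxx.
Qed.

Lemma path_weight_drop_cycle M f a b p : (a < b)%N -> (b <= p)%N -> f a = f b ->
  exists g, [/\ g 0%N = f 0%N, g (p - (b - a))%N = f p &
    path_weight M f 0 p = smul (path_weight M f a b) (path_weight M g 0 (p - (b - a)))].
Proof.
move=> hab hbp fab.
pose g t := if (t < a)%N then f t else f (t + (b - a))%N.
have g0 : g 0%N = f 0%N.
  rewrite /g; case: ifP => // /negbT; rewrite -leqNgt leqn0 => /eqP a0; subst a.
  by rewrite add0n subn0 fab.
have gp : g (p - (b - a))%N = f p by rewrite /g ifF; [congr f; lia | lia].
exists g; split => //.
have hap : (a <= p - (b - a))%N by lia.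
rewrite (path_weight_cat M f (leq0n a) (leq_trans (ltnW hab) hbp)).
rewrite (path_weight_cat M f (ltnW hab) hbp) (path_weight_cat M g (leq0n a) hap).
have -> : path_weight M f 0 a = path_weight M g 0 a.
  apply: eq_path_weight => t /andP[_ hta]; rewrite /g hta; split => //.
  case: ifP => // /negbT; rewrite -leqNgt => hat.
  have -> : t.+1 = a by lia.
  by rewrite fab; congr f; lia.
have -> : path_weight M f b p = path_weight M g a (p - (b - a)).
  rewrite (path_weight_shift _ _ b) (path_weight_shift _ _ a).
  have -> : (p - (b - a) - a = p - b)%N by lia.
  by apply: eq_path_weight => t _; rewrite /g !ifF; [split; congr f; lia | lia | lia].
by ring.
Qed.

Lemma mpow_sle_kstar M : short_cycles_le1 M -> forall p i j, sle (mpow M p i j) (kstar M i j).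
Proof.
move=> hM q; elim: q.+1 {-2}q (ltnSn q) => // N IH p hp i j.
apply: mpow_sle_of_paths => f f0 fp.
case: (ltnP p n) => hpn.
  apply: sle_trans (path_weight_le_mpow M f p) _; rewrite f0 fp.
  exact: (sle_bigsum_term (fun q : 'I_n => mpow M q i j) (Ordinal hpn)).
have [a [b [/andP[hab hbn] fab]]] := path_repeats f.
have [g [g0 gp ->]] := path_weight_drop_cycle M hab (leq_trans hbn hpn) fab.
apply: (sle_trans (sle_mul2r _ (hM f a b hab _ fab))); first lia.
rewrite smul1; apply: sle_trans (path_weight_le_mpow M g _) _.
by rewrite g0 gp f0 fp; apply: IH; lia.
Qed.

Definition cyclic_walk k (c : {ffun 'I_k.+1 -> 'I_n}) (t : nat) : 'I_n :=
  c (Ordinal (@ltn_pmod t k.+1 isT)).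

Lemma cycle_prod_path_weight M k (c : {ffun 'I_k.+1 -> 'I_n}) :
  sprod (fun j : 'I_k.+1 => M (c j) (c (ordS j))) = path_weight M (cyclic_walk c) 0 k.+1.
Proof.
rewrite /path_weight big_mkord /sprod; apply: eq_bigr => j _; rewrite /cyclic_walk.
by congr (M (c _) (c _)); apply: val_inj => //=; rewrite modn_small.
Qed.

Lemma sroot_cycle_le_spec_radius M k (hk : (k < n)%N) (c : {ffun 'I_k.+1 -> 'I_n}) :
  sle (sroot k.+1 (sprod (fun j : 'I_k.+1 => M (c j) (c (ordS j))))) (spec_radius M).
Proof.
apply: sle_trans (sle_bigsum_term (fun k0 : 'I_n => ssum (fun c0 : {ffun 'I_k0.+1 -> 'I_n} =>
  sroot k0.+1 (sprod (fun j : 'I_k0.+1 => M (c0 j) (c0 (ordS j)))))) (Ordinal hk)).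
exact: (sle_bigsum_term (fun c0 : {ffun 'I_k.+1 -> 'I_n} =>
  sroot k.+1 (sprod (fun j : 'I_k.+1 => M (c0 j) (c0 (ordS j))))) c).
Qed.

Lemma cycle_weight_le_spec_radius M f a b : (a < b)%N -> (b - a <= n)%N -> f a = f b ->
  sle (path_weight M f a b) (spow (spec_radius M) (b - a)).
Proof.
move=> hab hbn fab; rewrite path_weight_shift.
have [k ek] : exists k, (b - a)%N = k.+1 by exists (b - a).-1; lia.
rewrite ek; pose c := [ffun j : 'I_k.+1 => f (j + a)%N].
have -> : path_weight M (fun t => f (t + a)%N) 0 k.+1 = path_weight M (cyclic_walk c) 0 k.+1.
  apply: eq_path_weight => t /andP[_ ht]; rewrite /cyclic_walk !ffunE /= modn_small //.
  split => //; case: (ltnP t.+1 k.+1) => htk; first by rewrite modn_small.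
  have -> : t.+1 = k.+1 by lia.
  by rewrite modnn add0n fab; congr f; lia.
rewrite -cycle_prod_path_weight; set s := sprod _; rewrite -(srootK s (ltn0Sn k)).
by apply/spow_sle/sroot_cycle_le_spec_radius; lia.
Qed.

Lemma spec_radius_neq0 M i : M i i <> szero X -> spec_radius M <> szero X.
Proof.
move=> hii; have hn : (0 < n)%N by case: n i {hii} => [[]|].
apply: sle_neq0 (sroot_cycle_le_spec_radius M hn [ffun _ : 'I_1 => i]) _.
set s := sprod _; have -> : s = M i i by rewrite /s /sprod big_ord1 !ffunE.
by move=> h0; apply: hii; rewrite -(srootK (M i i) (ltn0Sn 0)) h0 spow0n.
Qed.

Lemma short_cycles_le1_scaled M : spec_radius M <> szero X ->
  short_cycles_le1 (mscale (sinv (spec_radius M)) M).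
Proof.
move=> hmu f a b hab hbn fab.
rewrite path_weight_shift path_weight_scale -(path_weight_shift M f a b).
have -> : sone X = smul (spow (sinv (spec_radius M)) (b - a)) (spow (spec_radius M) (b - a)).
  by rewrite -spowMn smulC smulV // spow1n.
exact/sle_mul2l/cycle_weight_le_spec_radius.
Qed.

(* [qform M x] is [x^- M x] for regular [x]. *)
Definition qform M (x : svec X n) : X :=
  ssum (fun i => ssum (fun k => smul (smul (sinv (x i)) (M i k)) (x k))).

Definition subeigen M (x : svec X n) : Prop := forall i, sle (mvmul M x i) (x i).

Lemma qform_term_le M (x : svec X n) i k :
  sle (smul (smul (sinv (x i)) (M i k)) (x k)) (qform M x).
Proof.
apply: sle_trans (sle_bigsum_term (fun i0 => ssum (fun k0 =>
  smul (smul (sinv (x i0)) (M i0 k0)) (x k0))) i).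
exact: (sle_bigsum_term (fun k0 => smul (smul (sinv (x i)) (M i k0)) (x k0)) k).
Qed.

Lemma entry_le_qform M (x : svec X n) i k : regular x ->
  sle (M i k) (smul (smul (x i) (qform M x)) (sinv (x k))).
Proof.
move=> hx; have -> : M i k = smul (smul (x i) (smul (smul (sinv (x i)) (M i k)) (x k)))
                                  (sinv (x k)).
  have -> : smul (smul (x i) (smul (smul (sinv (x i)) (M i k)) (x k))) (sinv (x k))
          = smul (smul (x i) (sinv (x i))) (smul (smul (x k) (sinv (x k))) (M i k)) by ring.
  by rewrite !smulKV.
by apply/sle_mul2r/sle_mul2l/qform_term_le.
Qed.

(* Along a path the factors [x_(g t)] telescope. *)
Lemma path_weight_le_qform M (x : svec X n) g p : regular x ->
  sle (path_weight M g 0 p) (smul (smul (x (g 0%N)) (spow (qform M x) p)) (sinv (x (g p)))).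
Proof.
move=> hx; elim: p => [|p IH].
  rewrite path_weight_nil [spow _ 0]/= (smulC _ (sone X)) smul1 smulV //.
  exact: sle_refl.
rewrite path_weight_recr //; apply: sle_trans (sle_mul IH (entry_le_qform _ _ _ hx)) _.
have -> : smul (smul (smul (x (g 0%N)) (spow (qform M x) p)) (sinv (x (g p))))
               (smul (smul (x (g p)) (qform M x)) (sinv (x (g p.+1))))
        = smul (smul (x (g p)) (sinv (x (g p))))
               (smul (smul (x (g 0%N)) (spow (qform M x) p.+1)) (sinv (x (g p.+1)))).
  by rewrite spowS; ring.
by rewrite smulKV //; apply: sle_refl.
Qed.

Lemma spec_radius_le_qform M (x : svec X n) : regular x -> sle (spec_radius M) (qform M x).
Proof.
move=> hx; apply: bigsum_sle => k; apply: bigsum_sle => c.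
apply: (@spow_sle_cancel _ _ k.+1) => //; rewrite srootK // cycle_prod_path_weight.
apply: sle_trans (path_weight_le_qform M _ _ hx) _.
have -> : cyclic_walk c k.+1 = cyclic_walk c 0.
  by rewrite /cyclic_walk; congr (c _); apply: val_inj; rewrite /= modnn mod0n.
rewrite smulC smulA (smulC _ (x _)) smulKV //; exact: sle_refl.
Qed.

Lemma qform_sle_iff_subeigen M mu (x : svec X n) : mu <> szero X -> regular x ->
  sle (qform M x) mu <-> subeigen (mscale (sinv mu) M) x.
Proof.
move=> hmu hx; split.
- move=> hq i; apply: bigsum_sle => k.
  have := sle_mul2r (smul (sinv mu) (x i)) (sle_trans (qform_term_le M x i k) hq).
  have -> : smul (smul (smul (sinv (x i)) (M i k)) (x k)) (smul (sinv mu) (x i))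
          = smul (smul (x i) (sinv (x i))) (smul (mscale (sinv mu) M i k) (x k)).
    by rewrite /mscale; ring.
  by rewrite smulKV // (smulA mu) smulKV.
- move=> hsub; apply: bigsum_sle => i; apply: bigsum_sle => k.
  have hk : sle (smul (mscale (sinv mu) M i k) (x k)) (x i).
    exact: sle_trans (sle_bigsum_term (fun k0 => smul (mscale (sinv mu) M i k0) (x k0)) k)
                     (hsub i).
  have := sle_mul2l (smul mu (sinv (x i))) hk.
  have -> : smul (smul mu (sinv (x i))) (smul (mscale (sinv mu) M i k) (x k))
          = smul (smul mu (sinv mu)) (smul (smul (sinv (x i)) (M i k)) (x k)).
    by rewrite /mscale; ring.
  have -> : smul (smul mu (sinv (x i))) (x i) = smul (smul (x i) (sinv (x i))) mu by ring.
  by rewrite !smulKV.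
Qed.

Lemma sle1_kstar_diag M i : sle (sone X) (kstar M i i).
Proof.
have hn : (0 < n)%N by case: n i => [[]|].
apply: sle_trans (sle_bigsum_term (fun q : 'I_n => mpow M q i i) (Ordinal hn)).
by rewrite /= /mid eqxx; apply: sle_refl.
Qed.

Lemma kstar_subeigen M (u : svec X n) : short_cycles_le1 M -> subeigen M (mvmul (kstar M) u).
Proof.
move=> hM i; apply: bigsum_sle => k; rewrite /mvmul /ssum big_distrr; apply: bigsum_sle => j.
apply: sle_trans (sle_bigsum_term (fun j0 => smul (kstar M i j0) (u j0)) j).
rewrite /= smulA; apply: sle_mul2r; rewrite {1}/kstar big_distrr; apply: bigsum_sle => p /=.
have [->|/eqP hik] := eqVneq (M i k) (szero X); first by rewrite smul0; apply: sle0x.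
have hc : kstar M i j = smul (M i k) (smul (sinv (M i k)) (kstar M i j)).
  by rewrite smulA smulKV.
rewrite hc; apply: sle_mul2l; apply: mpow_sle_of_paths => f f0 fp.
apply: sle_mulVr => //; pose f' t := if t is t'.+1 then f t' else i.
have -> : smul (M i k) (path_weight M f 0 p) = path_weight M f' 0 p.+1.
  by rewrite /path_weight big_nat_recl //= f0.
have := path_weight_le_mpow M f' p.+1; rewrite [f' p.+1]/= fp => hf'.
exact: sle_trans hf' (mpow_sle_kstar hM _ _ _).
Qed.

Lemma kstar_regular M (u : svec X n) : (forall i j, M i j <> szero X) ->
  nonzero_vec u -> regular (mvmul (kstar M) u).
Proof.
move=> hM [j0 hj0] i.
apply: sle_neq0 (sle_bigsum_term (fun j => smul (kstar M i j) (u j)) j0) _.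
apply: smul_neq0 _ hj0; have [<-|hij] := eqVneq i j0.
  exact: sle_neq0 (sle1_kstar_diag M i) (@sone_neq0 X).
have h1 : (1 < n)%N by move: (ltn_ord i) (ltn_ord j0) hij; rewrite -val_eqE /=; lia.
apply: sle_neq0 (sle_bigsum_term (fun q : 'I_n => mpow M q i j0) (Ordinal h1)) _.
apply: sle_neq0 (path_weight_le_mpow M (fun t => if t == 0%N then i else j0) 1) _.
by rewrite path_weight_recr // path_weight_nil smul1.
Qed.

Lemma kstar_fixed M (x : svec X n) : subeigen M x -> mvmul (kstar M) x = x.
Proof.
move=> hx; have hpow p i j : sle (smul (mpow M p i j) (x j)) (x i).
  elim: p i j => [|p IH] i j.
    rewrite /= /mid; case: eqP => [->|_]; first by rewrite smul1; apply: sle_refl.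
    by rewrite smul0; apply: sle0x.
  rewrite mpowS /mmul /ssum big_distrl; apply: bigsum_sle => k /=.
  rewrite -smulA; apply: sle_trans (IH i k); apply: sle_mul2l.
  exact: sle_trans (sle_bigsum_term (fun k0 => smul (M k k0) (x k0)) j) (hx k).
apply: functional_extensionality => i; apply: sle_anti.
  apply: bigsum_sle => j; rewrite /kstar big_distrl; apply: bigsum_sle => p; exact: hpow.
apply: sle_trans (sle_bigsum_term (fun j => smul (kstar M i j) (x j)) i).
by rewrite -{1}(smul1 (x i)); apply/sle_mul2r/sle1_kstar_diag.
Qed.

Lemma qformD M N (x : svec X n) :
  qform (fun i j => sadd (M i j) (N i j)) x = sadd (qform M x) (qform N x).
Proof.
rewrite /qform /ssum -big_split; apply: eq_bigr => i _.
by rewrite -big_split; apply: eq_bigr => k _ /=; ring.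
Qed.

Lemma qform_sum m (M : 'I_m -> smat X n) (x : svec X n) :
  qform (fun i j => \big[@sadd X/szero X]_(l < m) M l i j) x
  = \big[@sadd X/szero X]_(l < m) qform (M l) x.
Proof.
rewrite /qform /ssum; symmetry; rewrite exchange_big; apply: eq_bigr => i _.
rewrite exchange_big; apply: eq_bigr => k _.
by rewrite big_distrr big_distrl.
Qed.

Lemma mdist_outer_conj (A : smat X n) (x : svec X n) : regular x ->
  mdist A (outer_conj x) = sadd (qform A x) (qform (mconj A) x).
Proof.
move=> hx; have outerE i k : outer_conj x i k = smul (x i) (sinv (x k)).
  by rewrite /outer_conj /vconj sinvzE.
have conj_outerE i k : mconj (outer_conj x) i k = smul (x i) (sinv (x k)).
  rewrite /mconj outerE sinvzE; last exact/smul_neq0/sinv_neq0.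
  by rewrite sinvM ?sinvK //; [ring | apply: sinv_neq0].
rewrite /mdist /mtr /mmul /qform /ssum; congr sadd.
  rewrite exchange_big; apply: eq_bigr => i _; apply: eq_bigr => k _.
  by rewrite conj_outerE; ring.
by apply: eq_bigr => i _; apply: eq_bigr => k _; rewrite outerE; ring.
Qed.

Lemma sum_mdist_outer_conj m (A : 'I_m -> smat X n) (x : svec X n) : regular x ->
  \big[@sadd X/szero X]_(l < m) mdist (A l) (outer_conj x) =
  qform (fun i j => \big[@sadd X/szero X]_(l < m) sadd (A l i j) (mconj (A l) i j)) x.
Proof.
by move=> hx; rewrite qform_sum; apply: eq_bigr => l _; rewrite mdist_outer_conj // qformD.
Qed.

End Matrices.
End Semifield.

Theorem theorem2 (X : idsemifield) (n m : nat) (A : 'I_m -> smat X n)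
  (hn : (0 < n)%N)
  (B := fun i j => \big[@sadd X/szero X]_(l < m) sadd (A l i j) (mconj (A l) i j))
  (hB : forall i j, B i j <> szero X)
  (mu := spec_radius B)
  (Bmu := mscale (sinv mu) B)
  (F := fun x : svec X n => \big[@sadd X/szero X]_(l < m) mdist (A l) (outer_conj x)) :
  (forall x : svec X n, regular x -> sle mu (F x)) /\
  (exists x : svec X n, regular x /\ F x = mu) /\
  (forall x : svec X n,
     (regular x /\ F x = mu) <->
     (exists u : svec X n, nonzero_vec u /\ x = mvmul (kstar Bmu) u)).
Proof.
have hmu : mu <> szero X := spec_radius_neq0 (hB (Ordinal hn) (Ordinal hn)).
have hBmu i j : Bmu i j <> szero X by apply/smul_neq0/hB/sinv_neq0.
have FE x : regular x -> F x = qform B x by exact: sum_mdist_outer_conj.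
have optimal u :
    nonzero_vec u -> regular (mvmul (kstar Bmu) u) /\ F (mvmul (kstar Bmu) u) = mu.
  move=> hu; have hx := kstar_regular hBmu hu; split => //.
  rewrite FE //; apply: sle_anti; last exact: spec_radius_le_qform.
  exact/(qform_sle_iff_subeigen _ hmu hx)/kstar_subeigen/short_cycles_le1_scaled.
split; first by move=> x hx; rewrite FE //; exact: spec_radius_le_qform.
split.
  exists (mvmul (kstar Bmu) (fun _ => sone X)); apply: optimal.
  by exists (Ordinal hn); exact: sone_neq0.
move=> x; split => [[hx hFx]|[u [hu ->]]]; last exact: optimal.
exists x; split; first by exists (Ordinal hn); exact: hx.
symmetry; apply/kstar_fixed/(qform_sle_iff_subeigen _ hmu hx).
by rewrite -FE // hFx; exact: sle_refl.
Qed.
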